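(* Let $D=(-\pi/2,\pi/2)\times(-\pi/2,\pi/2)\subset\mathbb{R}^2$. Let $L$ be the space of functions $u:\overline D\to\mathbb{R}$ such that each $u$ is $C^\infty$ on some open set containing $\overline D$ and vanishes on $\partial D$. Then there exist $u,v\in L$ with $v\neq u$ and $v\neq -u$ such that $$u\,\Delta u=v\,\Delta v\quad\text{in } D.$$ In other words, for some continuous function $g$ on $\overline D$, the Dirichlet problem $$u\,\Delta u=g\ \text{in } D,\qquad u=0\ \text{on } \partial D$$ has more than two solutions in $L$.
   Context: $\Delta=\partial^2/\partial x^2+\partial^2/\partial y^2$ is the Laplacian, and $\partial D$ is the boundary of the square $D$. *)

From Stdlib Require Export Reals Lra.
Open Scope R_scope.

Definition in_closed_square (x y : R) : Prop :=
  -(PI/2) <= x <= PI/2 /\ -(PI/2) <= y <= PI/2.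

Definition in_open_square (x y : R) : Prop :=
  -(PI/2) < x < PI/2 /\ -(PI/2) < y < PI/2.

Definition on_boundary (x y : R) : Prop :=
  in_closed_square x y /\ ~ in_open_square x y.

Definition open2 (U : R -> R -> Prop) : Prop :=
  forall x y, U x y -> exists r, 0 < r /\
    forall x' y', (x' - x)^2 + (y' - y)^2 < r^2 -> U x' y'.

Definition continuous2_on (U : R -> R -> Prop) (f : R -> R -> R) : Prop :=
  forall x y, U x y -> forall eps, 0 < eps -> exists delta, 0 < delta /\
    forall x' y', (x' - x)^2 + (y' - y)^2 < delta^2 ->
      Rabs (f x' y' - f x y) < eps.

(* f is C^infinity on the open set U: there is a family F i j (playing the role
   of d^i/dx^i d^j/dy^j f) with F 0 0 = f on U, every F i j continuous on U,
   and the partial derivatives of F i j in x and in y being F (i+1) j and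
   F i (j+1) on U. *)
Definition smooth_on (U : R -> R -> Prop) (f : R -> R -> R) : Prop :=
  exists F : nat -> nat -> R -> R -> R,
    (forall x y, U x y -> F O O x y = f x y) /\
    forall i j, continuous2_on U (F i j) /\
      forall x y, U x y ->
        derivable_pt_lim (fun t => F i j t y) x (F (S i) j x y) /\
        derivable_pt_lim (fun t => F i j x t) y (F i (S j) x y).

Definition in_L (u : R -> R -> R) : Prop :=
  exists U : R -> R -> Prop,
    open2 U /\ (forall x y, in_closed_square x y -> U x y) /\
    smooth_on U u /\
    (forall x y, on_boundary x y -> u x y = 0).

Definition second_dx (f : R -> R -> R) (x y l : R) : Prop :=
  exists g : R -> R, exists delta, 0 < delta /\
    (forall t, Rabs (t - x) < delta -> derivable_pt_lim (fun s => f s y) t (g t)) /\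
    derivable_pt_lim g x l.

Definition second_dy (f : R -> R -> R) (x y l : R) : Prop :=
  exists g : R -> R, exists delta, 0 < delta /\
    (forall t, Rabs (t - y) < delta -> derivable_pt_lim (fun s => f x s) t (g t)) /\
    derivable_pt_lim g y l.

Definition is_laplacian (f : R -> R -> R) (x y l : R) : Prop :=
  exists a b, second_dx f x y a /\ second_dy f x y b /\ l = a + b.

From Stdlib Require Import Reals Lra Factorial ClassicalEpsilon.
From Coquelicot Require Import Coquelicot.
Open Scope R_scope.

(* Let a(x) = exp(-1/x) cos x for x > 0 and a(x) = 0 for x <= 0, and b(x) = a(-x).
   Both are smooth, vanish at x = +-pi/2, and have disjoint supports, so every
   product of a derivative of a with a derivative of b vanishes.  For
   u = (a + b)(x) cos y and v = (a - b)(x) cos y the products u Lap u and v Lap v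
   therefore differ only by such cross terms and coincide, although v <> u and
   v <> -u.  Smoothness of a is obtained without a Leibniz formula: the functions
   generated by the x |-> exp(-1/x) x^-n, sin, cos and constants under sums,
   products and x |-> -x form a class closed under differentiation. *)

Lemma pow_div_fact_le_exp x n : 0 <= x -> x ^ n / INR (fact n) <= exp x.
Proof.
intro Hx. apply Rle_trans with (2 := exp_ge_taylor x n Hx).
destruct n as [|n]; [simpl; lra|].
rewrite tech5. enough (0 <= sum_f_R0 (fun k => x ^ k / INR (fact k)) n) by lra.
apply cond_pos_sum; intro k. apply Rdiv_le_0_compat; [apply pow_le; lra|].
apply INR_fact_lt_0.
Qed.

Definition flat (n : nat) (t : R) : R :=
  if Rlt_dec 0 t then exp (- / t) * (/ t) ^ n else 0.

Lemma flat_le0 n t : t <= 0 -> flat n t = 0.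
Proof. intro Ht. unfold flat. destruct (Rlt_dec 0 t); [lra|reflexivity]. Qed.

Lemma flat_gt0 n t : 0 < t -> 0 < flat n t.
Proof.
intro Ht. unfold flat. destruct (Rlt_dec 0 t); [|lra].
apply Rmult_lt_0_compat; [apply exp_pos|apply pow_lt, Rinv_0_lt_compat; exact Ht].
Qed.

Lemma flat_le n h : 0 < h -> flat n h <= INR (fact (S n)) * h.
Proof.
unfold flat. destruct (Rlt_dec 0 h) as [Hh|]; [|lra]. intros _. set (s := / h).
assert (Hs : 0 < s) by (apply Rinv_0_lt_compat; exact Hh).
pose proof (INR_fact_lt_0 (S n)) as Hf.
pose proof (pow_div_fact_le_exp s (S n) (Rlt_le _ _ Hs)) as Hexp.
rewrite exp_Ropp. replace h with (/ s) by (unfold s; rewrite Rinv_inv; auto).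
set (F := INR (fact (S n))) in *.
(* with [s = 1/h], the claim is [s^n / exp s <= F / s], i.e. [s^(n+1) / F <= exp s] *)
assert (Hes := exp_pos s).
replace (/ exp s * s ^ n) with ((s ^ S n / F) * (F / s) / exp s) by (simpl; field; lra).
replace (F * / s) with (exp s * (F / s) / exp s) by (field; lra).
apply Rmult_le_compat_r; [left; apply Rinv_0_lt_compat; lra|].
apply Rmult_le_compat_r; [apply Rdiv_le_0_compat; lra|exact Hexp].
Qed.

Lemma derivable_pt_lim_flat_pos n t : 0 < t ->
  derivable_pt_lim (flat n) t (flat (S (S n)) t - INR n * flat (S n) t).
Proof.
intro Ht.
apply derivable_pt_lim_locally_ext with (fun s => exp (- / s) * (/ s) ^ n) 0 (t + 1);
  [lra| intros s Hs; unfold flat; destruct (Rlt_dec 0 s); [reflexivity|lra]|].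
unfold flat. destruct (Rlt_dec 0 t); [|lra].
apply is_derive_Reals. auto_derive; [lra|].
destruct n as [|n]; [simpl; field; lra|].
rewrite S_INR. simpl. field. lra.
Qed.

Lemma derivable_pt_lim_flat_neg n t : t < 0 ->
  derivable_pt_lim (flat n) t (flat (S (S n)) t - INR n * flat (S n) t).
Proof.
intro Ht. rewrite !flat_le0 by lra. replace (0 - INR n * 0) with 0 by ring.
apply derivable_pt_lim_locally_ext with (fun _ => 0) (t - 1) 0;
  [lra| intros s Hs; rewrite flat_le0 by lra; reflexivity|].
apply derivable_pt_lim_const.
Qed.

Lemma derivable_pt_lim_flat_0 n : derivable_pt_lim (flat n) 0 0.
Proof.
intros eps Heps.
set (C := INR (fact (S (S n)))).
assert (HC : 0 < C) by apply INR_fact_lt_0.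
assert (Hd : 0 < eps / C) by (apply Rdiv_lt_0_compat; assumption).
exists (mkposreal _ Hd). simpl. intros h Hh0 Hhd.
rewrite Rplus_0_l, (flat_le0 n 0), Rminus_0_r, Rminus_0_r by lra.
destruct (Rlt_dec 0 h) as [Hh|Hh].
  replace (flat n h / h) with (flat (S n) h)
    by (unfold flat; destruct (Rlt_dec 0 h); [simpl; field; lra|lra]).
  pose proof (flat_le (S n) h Hh). pose proof (flat_gt0 (S n) h Hh).
  rewrite Rabs_right in * by lra.
  apply Rle_lt_trans with (C * h); [assumption|].
  apply Rmult_lt_compat_l with (r := C) in Hhd; [|assumption].
  replace (C * (eps / C)) with eps in Hhd by (field; lra). exact Hhd.
- rewrite flat_le0 by lra. unfold Rdiv. rewrite Rmult_0_l, Rabs_R0. exact Heps.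
Qed.

Lemma derivable_pt_lim_flat n t :
  derivable_pt_lim (flat n) t (flat (S (S n)) t - INR n * flat (S n) t).
Proof.
destruct (Rtotal_order t 0) as [Ht|[Ht|Ht]].
- apply derivable_pt_lim_flat_neg; exact Ht.
- subst t. rewrite !flat_le0 by lra. replace (0 - INR n * 0) with 0 by ring.
  apply derivable_pt_lim_flat_0.
- apply derivable_pt_lim_flat_pos; exact Ht.
Qed.

Definition is_deriv_seq (F : nat -> R -> R) : Prop :=
  forall n t, derivable_pt_lim (F n) t (F (S n) t).

Lemma is_deriv_seq_plus F G : is_deriv_seq F -> is_deriv_seq G ->
  is_deriv_seq (fun n t => F n t + G n t).
Proof. intros HF HG n t. apply (derivable_pt_lim_plus (F n) (G n)); auto. Qed.

Lemma is_deriv_seq_minus F G : is_deriv_seq F -> is_deriv_seq G ->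
  is_deriv_seq (fun n t => F n t - G n t).
Proof. intros HF HG n t. apply (derivable_pt_lim_minus (F n) (G n)); auto. Qed.

Lemma is_deriv_seq_zero_on F a b : is_deriv_seq F ->
  (forall t, a < t < b -> F O t = 0) -> forall n t, a < t < b -> F n t = 0.
Proof.
intros HF H0 n. induction n as [|n IH]; intros t Ht; [auto|].
apply (uniqueness_limite (F n) t); [apply HF|].
apply derivable_pt_lim_locally_ext with (fun _ => 0) a b; [exact Ht| |].
- intros s Hs. symmetry. auto.
- apply derivable_pt_lim_const.
Qed.

Lemma is_deriv_seq_continuity F : is_deriv_seq F -> forall n t, continuity_pt (F n) t.
Proof.
intros HF n t. apply derivable_continuous_pt. exists (F (S n) t). apply HF.
Qed.

Lemma deriv_seq_of_deriv_closed (P : (R -> R) -> Prop) :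
  (forall f, P f -> exists g, P g /\ forall t, derivable_pt_lim f t (g t)) ->
  forall f, P f -> exists F, F O = f /\ is_deriv_seq F.
Proof.
intros HP f Hf.
pose (d := fun s : {f | P f} =>
  let (g, Hg) := constructive_indefinite_description _ (HP _ (proj2_sig s)) in
  exist P g (proj1 Hg)).
assert (Hd : forall s t, derivable_pt_lim (proj1_sig s) t (proj1_sig (d s) t)).
{ intros s t. unfold d.
  destruct (constructive_indefinite_description _ _) as [g Hg]. apply (proj2 Hg). }
exists (fun n => proj1_sig (Nat.iter n d (exist _ f Hf))). split; [reflexivity|].
intros n t. apply Hd.
Qed.

Inductive flat_trig : (R -> R) -> Prop :=
| flat_trig_flat n : flat_trig (flat n)
| flat_trig_cos : flat_trig cos
| flat_trig_sin : flat_trig sin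
| flat_trig_const c : flat_trig (fun _ => c)
| flat_trig_plus f g : flat_trig f -> flat_trig g -> flat_trig (fun t => f t + g t)
| flat_trig_mult f g : flat_trig f -> flat_trig g -> flat_trig (fun t => f t * g t)
| flat_trig_opp_arg f : flat_trig f -> flat_trig (fun t => f (- t)).

Lemma flat_trig_deriv f : flat_trig f ->
  exists g, flat_trig g /\ forall t, derivable_pt_lim f t (g t).
Proof.
induction 1 as [n| | |c|f g _ [f' [Hf' Df]] _ [g' [Hg' Dg]]
  |f g Hf [f' [Hf' Df]] Hg [g' [Hg' Dg]]|f _ [f' [Hf' Df]]].
- exists (fun t => flat (S (S n)) t + (fun _ => - INR n) t * flat (S n) t). split.
  + repeat constructor.
  + intro t. replace (flat (S (S n)) t + - INR n * flat (S n) t)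
      with (flat (S (S n)) t - INR n * flat (S n) t) by ring.
    apply derivable_pt_lim_flat.
- exists (fun t => (fun _ => -1) t * sin t). split; [repeat constructor|].
  intro t. replace (-1 * sin t) with (- sin t) by ring. apply derivable_pt_lim_cos.
- exists cos. split; [constructor|apply derivable_pt_lim_sin].
- exists (fun _ => 0). split; [constructor|intro t; apply derivable_pt_lim_const].
- exists (fun t => f' t + g' t). split; [constructor; assumption|].
  intro t. apply (derivable_pt_lim_plus f g); auto.
- exists (fun t => f' t * g t + f t * g' t). split; [repeat constructor; assumption|].
  intro t. apply (derivable_pt_lim_mult f g); auto.
- exists (fun t => (fun _ => -1) t * f' (- t)). split; [repeat constructor; assumption|].
  intro t. replace (-1 * f' (- t)) with (- f' (- t)) by ring.
  apply derivable_pt_lim_mirr_fwd. rewrite Ropp_involutive. apply Df.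
Qed.

Lemma flat_trig_deriv_seq f : flat_trig f -> exists F, F O = f /\ is_deriv_seq F.
Proof. apply deriv_seq_of_deriv_closed, flat_trig_deriv. Qed.

Lemma continuous2_on_of_continuous (U : R -> R -> Prop) f :
  (forall x y, U x y -> continuous (fun p : R * R => f (fst p) (snd p)) (x, y)) ->
  continuous2_on U f.
Proof.
intros Hf x y Hxy eps Heps.
destruct (proj1 (filterlim_locally _ _) (Hf x y Hxy) (mkposreal _ Heps)) as [d Hd].
exists d. split; [apply cond_pos|]. intros x' y' Hd2.
assert (Hsq : forall a, a ^ 2 < d ^ 2 -> Rabs a < d).
{ intros a Ha. pose proof (cond_pos d). unfold Rabs. destruct (Rcase_abs a); nra. }
apply (Hd (x', y')). split; apply Hsq; cbn [fst snd].
- change (minus x' x) with (x' - x). pose proof (pow2_ge_0 (y' - y)). lra.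
- change (minus y' y) with (y' - y). pose proof (pow2_ge_0 (x' - x)). lra.
Qed.

Lemma continuous2_on_mult_sep (U : R -> R -> Prop) A B :
  (forall t, continuity_pt A t) -> (forall t, continuity_pt B t) ->
  continuous2_on U (fun x y => A x * B y).
Proof.
intros HA HB. apply continuous2_on_of_continuous. intros x y _.
apply (continuous_mult (fun p : R * R => A (fst p)) (fun p : R * R => B (snd p))).
- apply continuous_comp; [apply continuous_fst|apply continuity_pt_filterlim, HA].
- apply continuous_comp; [apply continuous_snd|apply continuity_pt_filterlim, HB].
Qed.

Lemma on_boundary_cases x y : on_boundary x y ->
  x = PI / 2 \/ x = - (PI / 2) \/ y = PI / 2 \/ y = - (PI / 2).
Proof.
unfold on_boundary, in_closed_square, in_open_square. intros [Hc Ho].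
destruct (Req_dec x (PI / 2)); [auto|]. destruct (Req_dec x (- (PI / 2))); [auto|].
destruct (Req_dec y (PI / 2)); [auto|]. destruct (Req_dec y (- (PI / 2))); [auto|].
exfalso. apply Ho. lra.
Qed.

Lemma in_L_mult_sep F G : is_deriv_seq F -> is_deriv_seq G ->
  F O (PI / 2) = 0 -> F O (- (PI / 2)) = 0 -> G O (PI / 2) = 0 -> G O (- (PI / 2)) = 0 ->
  in_L (fun x y => F O x * G O y).
Proof.
intros HF HG F1 F2 G1 G2. exists (fun _ _ => True).
split; [|split; [|split]].
- intros x y _. exists 1. split; [lra|auto].
- auto.
- exists (fun i j x y => F i x * G j y). split; [reflexivity|]. intros i j. split.
  + apply continuous2_on_mult_sep; apply is_deriv_seq_continuity; assumption.
  + intros x y _. split.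
    * apply (derivable_pt_lim_scal_right (F i)), HF.
    * apply (derivable_pt_lim_scal (G j)), HG.
- intros x y Hb. destruct (on_boundary_cases x y Hb) as [E|[E|[E|E]]];
    rewrite E, ?F1, ?F2, ?G1, ?G2; ring.
Qed.

Lemma is_laplacian_mult_sep F G x y : is_deriv_seq F -> is_deriv_seq G ->
  is_laplacian (fun x y => F O x * G O y) x y (F 2%nat x * G O y + F O x * G 2%nat y).
Proof.
intros HF HG. exists (F 2%nat x * G O y), (F O x * G 2%nat y). split; [|split; [|reflexivity]].
- exists (fun t => F 1%nat t * G O y), 1. split; [lra|split].
  + intros t _. apply (derivable_pt_lim_scal_right (F O)), HF.
  + apply (derivable_pt_lim_scal_right (F 1%nat)), HF.
- exists (fun t => F O x * G 1%nat t), 1. split; [lra|split].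
  + intros t _. apply (derivable_pt_lim_scal (G O)), HG.
  + apply (derivable_pt_lim_scal (G 1%nat)), HG.
Qed.

Definition right_bump (x : R) : R := flat 0 x * cos x.

Definition left_bump (x : R) : R := right_bump (- x).

Lemma flat_trig_right_bump : flat_trig right_bump.
Proof. repeat constructor. Qed.

Lemma flat_trig_left_bump : flat_trig left_bump.
Proof. apply (flat_trig_opp_arg right_bump), flat_trig_right_bump. Qed.

Lemma right_bump_le0 x : x <= 0 -> right_bump x = 0.
Proof. intro Hx. unfold right_bump. rewrite flat_le0 by exact Hx. ring. Qed.

Lemma right_bump_pos x : 0 < x < PI / 2 -> 0 < right_bump x.
Proof.
intro Hx. apply Rmult_lt_0_compat; [apply flat_gt0; lra|apply cos_gt_0; lra].
Qed.

Lemma right_bump_PI2 : right_bump (PI / 2) = 0 /\ right_bump (- (PI / 2)) = 0.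
Proof. unfold right_bump. rewrite cos_neg, cos_PI2. split; ring. Qed.

Lemma left_bump_PI2 : left_bump (PI / 2) = 0 /\ left_bump (- (PI / 2)) = 0.
Proof.
unfold left_bump. rewrite Ropp_involutive. destruct right_bump_PI2. split; assumption.
Qed.

Lemma bump_deriv_seq_cross Fr Fl : is_deriv_seq Fr -> is_deriv_seq Fl ->
  Fr O = right_bump -> Fl O = left_bump ->
  forall n x, Fr O x * Fl n x = 0 /\ Fl O x * Fr n x = 0.
Proof.
intros HFr HFl Fr0 Fl0 n x. rewrite Fr0, Fl0. unfold left_bump.
destruct (Rtotal_order x 0) as [Hx|[Hx|Hx]].
- rewrite right_bump_le0, (is_deriv_seq_zero_on Fr (x - 1) 0 HFr) by
    (try (intros t Ht; rewrite Fr0; apply right_bump_le0); lra).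
  split; ring.
- rewrite !right_bump_le0 by lra. split; ring.
- rewrite (right_bump_le0 (- x)), (is_deriv_seq_zero_on Fl 0 (x + 1) HFl) by
    (try (intros t Ht; rewrite Fl0; apply right_bump_le0); lra).
  split; ring.
Qed.

Lemma laplacian_product_swap a a2 b b2 c c2 :
  a * b = 0 -> a * b2 = 0 -> b * a2 = 0 ->
  (a + b) * c * ((a2 + b2) * c + (a + b) * c2)
  = (a - b) * c * ((a2 - b2) * c + (a - b) * c2).
Proof.
intros Hab Hab2 Hba2.
apply Rminus_diag_uniq.
replace ((a + b) * c * ((a2 + b2) * c + (a + b) * c2)
         - (a - b) * c * ((a2 - b2) * c + (a - b) * c2))
  with (2 * c * c * (a * b2 + b * a2) + 4 * c * c2 * (a * b)) by ring.
rewrite Hab, Hab2, Hba2. ring.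
Qed.

Theorem theorem4 :
  exists u v : R -> R -> R,
    in_L u /\ in_L v /\
    (exists x y, in_closed_square x y /\ v x y <> u x y) /\
    (exists x y, in_closed_square x y /\ v x y <> - u x y) /\
    (forall x y, in_open_square x y ->
       exists lu lv, is_laplacian u x y lu /\ is_laplacian v x y lv /\
         u x y * lu = v x y * lv).
Proof.
destruct (flat_trig_deriv_seq _ flat_trig_right_bump) as [Fr [Fr0 HFr]].
destruct (flat_trig_deriv_seq _ flat_trig_left_bump) as [Fl [Fl0 HFl]].
destruct (flat_trig_deriv_seq _ flat_trig_cos) as [Fc [Fc0 HFc]].
pose proof (is_deriv_seq_plus Fr Fl HFr HFl) as HP.
pose proof (is_deriv_seq_minus Fr Fl HFr HFl) as HQ.
pose proof PI2_1. pose proof (right_bump_pos 1).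
destruct right_bump_PI2 as [R1 R2]. destruct left_bump_PI2 as [L1 L2].
exists (fun x y => (fun n t => Fr n t + Fl n t) O x * Fc O y),
       (fun x y => (fun n t => Fr n t - Fl n t) O x * Fc O y).
split; [|split; [|split; [|split]]].
- apply (in_L_mult_sep (fun n t => Fr n t + Fl n t) Fc); try assumption; cbv beta;
    rewrite ?Fr0, ?Fl0, ?Fc0, ?cos_neg, ?cos_PI2, ?R1, ?R2, ?L1, ?L2; ring.
- apply (in_L_mult_sep (fun n t => Fr n t - Fl n t) Fc); try assumption; cbv beta;
    rewrite ?Fr0, ?Fl0, ?Fc0, ?cos_neg, ?cos_PI2, ?R1, ?R2, ?L1, ?L2; ring.
- exists (-1), 0. split; [unfold in_closed_square; lra|].
  rewrite Fr0, Fl0, Fc0, cos_0, right_bump_le0 by lra. unfold left_bump.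
  replace (- -1) with 1 by ring. lra.
- exists 1, 0. split; [unfold in_closed_square; lra|].
  rewrite Fr0, Fl0, Fc0, cos_0. unfold left_bump. rewrite (right_bump_le0 (Ropp 1)) by lra. lra.
- intros x y _. do 2 eexists. split; [|split].
  + apply (is_laplacian_mult_sep (fun n t => Fr n t + Fl n t) Fc); assumption.
  + apply (is_laplacian_mult_sep (fun n t => Fr n t - Fl n t) Fc); assumption.
  + destruct (bump_deriv_seq_cross Fr Fl HFr HFl Fr0 Fl0 O x) as [Hab _].
    destruct (bump_deriv_seq_cross Fr Fl HFr HFl Fr0 Fl0 2 x) as [Hab2 Hba2].
    apply laplacian_product_swap; assumption.
Qed.
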